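(* Let $\{x_k\}$, $\{d_k\}$ be generated by Algorithm 1 or Algorithm 2 (described in the context) under the Standing Assumption and Matrix Assumption of the context, and suppose the algorithm does not terminate finitely. Write $d_k=u_k+v_k$ with $u_k\in\mathrm{Null}(J_k)$ and $v_k\in\mathrm{Range}(J_k^T)$. Then there exists $\kappa_v>0$ such that for all $k\in\mathbb{N}$, $\max\{\|v_k\|_2,\|v_k\|_2^2\}\le\kappa_v\|c_k\|_2$.
   Context: Notation: $g_k=\nabla f(x_k)$, $c_k=c(x_k)$, $J_k=\nabla c(x_k)^T$; $\phi(x,\tau)=\tau f(x)+\|c(x)\|_1$; $\Delta q(x,\tau,g,H,d)=-\tau(g^Td+\frac12\max\{d^THd,0\})+\|c(x)\|_1$. Matrix Assumption: symmetric $H_k$ with $\|H_k\|_2\le\kappa_H$ and $u^TH_ku\ge\zeta\|u\|_2^2$ whenever $J_ku=0$. Common iteration: $(d_k,y_k)$ solves $H_kd_k+J_k^Ty_k=-g_k$, $J_kd_k=-c_k$; stop if $g_k+J_k^Ty_k=0$ and $c_k=0$. $\tau_k^{trial}=\infty$ if $g_k^Td_k+\max\{d_k^TH_kd_k,0\}\le0$, else $\frac{(1-\sigma)\|c_k\|_1}{g_k^Td_k+\max\{d_k^TH_kd_k,0\}}$; $\tau_k=\tau_{k-1}$ if $\tau_{k-1}\le\tau_k^{trial}$, else $(1-\epsilon)\tau_k^{trial}$; $x_{k+1}=x_k+\alpha_kd_k$. (SD) for trial $\alpha$: $\phi(x_k+\alpha d_k,\tau_k)\le\phi(x_k,\tau_k)-\eta\alpha\Delta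 q(x_k,\tau_k,g_k,H_k,d_k)$. Algorithm 1 (inputs $\tau_{-1}>0$, $\epsilon,\sigma,\eta\in(0,1)$, $\rho>1$, $L_{-1}>0$, $\gamma_{-1,i}>0$): choose $L_{k,0}\in(0,L_{k-1}]$, $\gamma_{k,i,0}\in(0,\gamma_{k-1,i}]$; for $j=0,1,\dots$ with $\Lambda_{k,j}=\tau_kL_{k,j}+\sum_i\gamma_{k,i,j}$: $\widehat\alpha_{k,j}=\frac{2(1-\eta)\Delta q(x_k,\tau_k,g_k,H_k,d_k)}{\Lambda_{k,j}\|d_k\|_2^2}$, $\widetilde\alpha_{k,j}=\widehat\alpha_{k,j}-\frac{4\|c_k\|_1}{\Lambda_{k,j}\|d_k\|_2^2}$; $\alpha_{k,j}=\widehat\alpha_{k,j}$ if $\widehat\alpha_{k,j}<1$, $1$ if $\widetilde\alpha_{k,j}\le1\le\widehat\alpha_{k,j}$, $\widetilde\alpha_{k,j}$ if $\widetilde\alpha_{k,j}>1$; accept ($\alpha_k=\alpha_{k,j}$, $L_k=L_{k,j}$, $\gamma_{k,i}=\gamma_{k,i,j}$) if (SD) holds or if both $f(x_k+\alpha_{k,j}d_k)\le f(x_k)+\alpha_{k,j}g_k^Td_k+\frac12L_{k,j}\alpha_{k,j}^2\|d_k\|_2^2$ (LF) and $|c_i(x_k+\alpha_{k,j}d_k)|\le|c_i(x_k)+\alpha_{k,j}\nabla c_i(x_k)^Td_k|+\frac12\gamma_{k,i,j}\alpha_{k,j}^2\|d_k\|_2^2$ (LC$_i$) for all $i$; otherwise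 multiply $L_{k,j}$ by $\rho$ if (LF) fails and $\gamma_{k,i,j}$ by $\rho$ if (LC$_i$) fails (others unchanged). Algorithm 2 (inputs $\tau_{-1}>0$, $\epsilon,\sigma,\eta,\nu\in(0,1)$, $\alpha>0$): $\alpha_k=\nu^j\alpha$ for the smallest $j\ge0$ such that (SD) holds. Standing Assumption: an open convex set $\mathcal X$ contains all iterates and trial points $x_k+\alpha_{k,j}d_k$; $f$ is $C^1$, bounded below on $\mathcal X$, $\nabla f$ bounded and $L$-Lipschitz on $\mathcal X$; $c$, $\nabla c^T$ bounded on $\mathcal X$; $\nabla c_i$ is $\gamma_i$-Lipschitz on $\mathcal X$; singular values of $\nabla c(x)^T$ bounded away from zero uniformly over $\mathcal X$. *)

(* Vectors of R^n are row vectors 'rV[R]_n. *)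
From mathcomp Require Import all_boot all_order all_algebra.
From mathcomp Require Import all_classical all_reals all_analysis.
Import Order.TTheory GRing.Theory Num.Theory.
Import numFieldNormedType.Exports.
Set Implicit Arguments.
Unset Strict Implicit.
Unset Printing Implicit Defensive.
Local Open Scope ring_scope.
Local Open Scope classical_set_scope.

Section Defs.
Context {R : realType}.

Definition dotv {n} (u v : 'rV[R]_n) : R := \sum_i u 0 i * v 0 i.
Definition norm2 {n} (u : 'rV[R]_n) : R := Num.sqrt (\sum_i u 0 i ^+ 2).
Definition norm1 {n} (u : 'rV[R]_n) : R := \sum_i `|u 0 i|.

Definition grad {n} (f : 'rV[R]_n -> R) (x : 'rV[R]_n) : 'rV[R]_n :=
  \row_i ('d f x (delta_mx 0 i)).

(** J(x) = grad c(x)^T (an m x n matrix, row i = grad c_i(x)^T).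
    [jacobian c x] is the n x m matrix with  'd c x v = v *m jacobian c x,
    i.e. jacobian c x = grad c(x). *)
Definition Jmat {n m} (c : 'rV[R]_n -> 'rV[R]_m) (x : 'rV[R]_n) : 'M[R]_(m, n) :=
  (jacobian c x)^T.

Definition convex_set {n} (X : set 'rV[R]_n) : Prop :=
  forall x z, X x -> X z -> forall t : R, 0 <= t <= 1 -> X ((1 - t) *: x + t *: z).

(** The smallest singular value of A (p x q), i.e. min_{|z|_2 = 1} |A z|_2 over
    z in R^(min) side: for q <= p it is min_{z in R^q} |A z|/|z|, otherwise
    (q > p) it is min_{w in R^p} |A^T w|/|w|.  [sv_lb A s] : all singular
    values of A are >= s.  (A z as a row vector is z *m A^T.) *)
Definition sv_lb {p q} (A : 'M[R]_(p, q)) (s : R) : Prop :=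
  if (q <= p)%N then forall z : 'rV[R]_q, s * norm2 z <= norm2 (z *m A^T)
  else forall w : 'rV[R]_p, s * norm2 w <= norm2 (w *m A).

Definition phi {n m} (f : 'rV[R]_n -> R) (c : 'rV[R]_n -> 'rV[R]_m)
  (x : 'rV[R]_n) (tau : R) : R := tau * f x + norm1 (c x).

Definition quadH {n} (H : 'M[R]_n) (d : 'rV[R]_n) : R := dotv (d *m H^T) d.

Definition dq {n m} (c : 'rV[R]_n -> 'rV[R]_m) (x : 'rV[R]_n) (tau : R)
  (g : 'rV[R]_n) (H : 'M[R]_n) (d : 'rV[R]_n) : R :=
  - tau * (dotv g d + 2^-1 * Num.max (quadH H d) 0) + norm1 (c x).

(** tau^trial ; None stands for +infinity *)
Definition tau_trial {n m} (sig : R) (g : 'rV[R]_n) (H : 'M[R]_n) (d : 'rV[R]_n)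
  (ck : 'rV[R]_m) : option R :=
  if dotv g d + Num.max (quadH H d) 0 <= 0 then None
  else Some ((1 - sig) * norm1 ck / (dotv g d + Num.max (quadH H d) 0)).

Definition tau_update (eps tprev : R) (tr : option R) : R :=
  match tr with
  | None => tprev
  | Some t => if tprev <= t then tprev else (1 - eps) * t
  end.

(** value at index k-1 of a sequence indexed from -1 *)
Definition prev {T} (tm1 : T) (s : nat -> T) (k : nat) : T :=
  if k is k'.+1 then s k' else tm1.

Definition SD {n m} (f : 'rV[R]_n -> R) (c : 'rV[R]_n -> 'rV[R]_m) (eta : R)
  (x : 'rV[R]_n) (tau : R) (g : 'rV[R]_n) (H : 'M[R]_n) (d : 'rV[R]_n) (a : R) : bool :=
  phi f c (x + a *: d) tau <= phi f c x tau - eta * a * dq c x tau g H d.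

(** Common iteration (shared by Algorithms 1 and 2), with g_k = grad f(x_k),
    J_k = Jmat c x_k, and the algorithm never terminating. *)
Definition common_iter {n m} (f : 'rV[R]_n -> R) (c : 'rV[R]_n -> 'rV[R]_m)
  (tau_m1 eps sig : R) (x d : nat -> 'rV[R]_n) (y : nat -> 'rV[R]_m)
  (H : nat -> 'M[R]_n) (tau alpha : nat -> R) : Prop :=
  forall k : nat,
    [/\ d k *m (H k)^T + y k *m Jmat c (x k) = - grad f (x k),
        d k *m (Jmat c (x k))^T = - c (x k),
        ~ (grad f (x k) + y k *m Jmat c (x k) = 0 /\ c (x k) = 0),
        tau k = tau_update eps (prev tau_m1 tau k)
                  (tau_trial sig (grad f (x k)) (H k) (d k) (c (x k))) &
        x k.+1 = x k + alpha k *: d k].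

Definition alpha1 (eta dqv Lam dd c1 : R) : R :=
  let ah := 2 * (1 - eta) * dqv / (Lam * dd) in
  let atl := ah - 4 * c1 / (Lam * dd) in
  if ah < 1 then ah else if atl <= 1 then 1 else atl.

(** Lin k j = L_{k,j}, gin k j i = gamma_{k,i,j},
    jk k = the inner index j at which the trial step is accepted
    (so L_k = Lin k (jk k), gamma_{k,i} = gin k (jk k) i).  Also records that
    the set X contains all trial points. *)
Definition alg1_steps {n m} (f : 'rV[R]_n -> R) (c : 'rV[R]_n -> 'rV[R]_m)
  (eta rho Lm1 : R) (gm1 : 'I_m -> R)
  (Lin : nat -> nat -> R) (gin : nat -> nat -> 'I_m -> R) (jk : nat -> nat)
  (X : set 'rV[R]_n) (x d : nat -> 'rV[R]_n) (H : nat -> 'M[R]_n)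
  (tau alpha : nat -> R) : Prop :=
  forall k : nat,
    let g := grad f (x k) in
    let J := Jmat c (x k) in
    let Lam j := tau k * Lin k j + \sum_i gin k j i in
    let al j := alpha1 eta (dq c (x k) (tau k) g (H k) (d k)) (Lam j)
                  (norm2 (d k) ^+ 2) (norm1 (c (x k))) in
    let LF j := f (x k + al j *: d k) <=
                f (x k) + al j * dotv g (d k) + 2^-1 * Lin k j * al j ^+ 2 * norm2 (d k) ^+ 2 in
    let LC j i := `|c (x k + al j *: d k) 0 i| <=
                  `|c (x k) 0 i + al j * dotv (row i J) (d k)|
                  + 2^-1 * gin k j i * al j ^+ 2 * norm2 (d k) ^+ 2 in
    let accept j := SD f c eta (x k) (tau k) g (H k) (d k) (al j)
                    \/ (LF j /\ forall i, LC j i) in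
    (0 < Lin k 0 <= prev Lm1 (fun k' => Lin k' (jk k')) k) /\
    (forall i, 0 < gin k 0 i <= prev gm1 (fun k' => gin k' (jk k')) k i) /\
    (forall j, (j < jk k)%N ->
       [/\ ~ accept j,
           Lin k j.+1 = (if LF j then Lin k j else rho * Lin k j) &
           forall i, gin k j.+1 i = (if LC j i then gin k j i else rho * gin k j i)]) /\
    accept (jk k) /\
    alpha k = al (jk k) /\
    (forall j, (j <= jk k)%N -> X (x k + al j *: d k)).

(** Algorithm 2 (backtracking) step-size selection; also records that X
    contains all trial points. *)
Definition alg2_steps {n m} (f : 'rV[R]_n -> R) (c : 'rV[R]_n -> 'rV[R]_m)
  (eta nu alpha0 : R) (X : set 'rV[R]_n) (x d : nat -> 'rV[R]_n)
  (H : nat -> 'M[R]_n) (tau alpha : nat -> R) : Prop :=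
  forall k : nat,
    let sd a := SD f c eta (x k) (tau k) (grad f (x k)) (H k) (d k) a in
    exists j : nat,
      [/\ alpha k = nu ^+ j * alpha0,
          sd (nu ^+ j * alpha0),
          (forall j', (j' < j)%N -> ~~ sd (nu ^+ j' * alpha0)) &
          forall j', (j' <= j)%N -> X (x k + (nu ^+ j' * alpha0) *: d k)].

(** Standing Assumption (apart from "X contains iterates and trial points",
    which is stated separately). *)
Definition standing {n m} (f : 'rV[R]_n -> R) (c : 'rV[R]_n -> 'rV[R]_m)
  (X : set 'rV[R]_n) : Prop :=
  open X /\ convex_set X /\
      (forall z, X z -> differentiable f z) /\ {within X, continuous (grad f)} /\
      (exists lb : R, forall z, X z -> lb <= f z) /\
      (exists B : R, forall z, X z -> norm2 (grad f z) <= B) /\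
      (exists L : R, forall z w, X z -> X w ->
          norm2 (grad f z - grad f w) <= L * norm2 (z - w)) /\
      (forall z, X z -> differentiable c z) /\
      (exists B : R, forall z, X z -> `|c z| <= B) /\
      (exists B : R, forall z, X z -> `|Jmat c z| <= B) /\
      (exists gam : 'I_m -> R, forall i z w, X z -> X w ->
          norm2 (row i (Jmat c z) - row i (Jmat c w)) <= gam i * norm2 (z - w)) /\
      (exists s : R, 0 < s /\ forall z, X z -> sv_lb (Jmat c z) s).

Definition matrix_assumption {n m} (c : 'rV[R]_n -> 'rV[R]_m)
  (x : nat -> 'rV[R]_n) (H : nat -> 'M[R]_n) : Prop :=
  exists kappaH zeta : R, 0 < zeta /\
    forall k, [/\ (H k)^T = H k,
                  (forall u : 'rV[R]_n, norm2 (u *m (H k)^T) <= kappaH * norm2 u) &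
                  (forall u : 'rV[R]_n, u *m (Jmat c (x k))^T = 0 ->
                      zeta * norm2 u ^+ 2 <= quadH (H k) u)].

End Defs.

From mathcomp Require Import all_boot all_order all_algebra.
From mathcomp Require Import all_classical all_reals all_analysis.
From mathcomp Require Import lra.
Import Order.TTheory GRing.Theory Num.Theory.
Import numFieldNormedType.Exports.
Set Implicit Arguments.
Unset Strict Implicit.
Unset Printing Implicit Defensive.

Local Open Scope ring_scope.
Local Open Scope classical_set_scope.

(* Since [u] lies in the null space of [J_k], the linearized constraint
   [J_k d_k = -c_k] reduces to [J_k v_k = -c_k].  As [v_k] lies in the range of
   [J_k^T], the lower bound [s] on the singular values of [J_k] gives
   [s |v_k| <= |J_k v_k| = |c_k|]: directly when [J_k^T] is injective, and
   otherwise from [v_k = J_k^T w], [s |w| <= |v_k|] and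
   [|v_k|^2 = w . J_k v_k] by AM-GM.  Boundedness of [c] on [X] then turns the bound on
   [|v_k|^2] into a linear one. *)

Section Euclidean.
Context {R : realType}.

Lemma norm2_ge0 n (z : 'rV[R]_n) : 0 <= norm2 z.
Proof. exact: sqrtr_ge0. Qed.

Lemma norm2_sqr n (z : 'rV[R]_n) : norm2 z ^+ 2 = \sum_i z 0 i ^+ 2.
Proof. by rewrite sqr_sqrtr // sumr_ge0 // => i _; rewrite sqr_ge0. Qed.

Lemma norm2N n (z : 'rV[R]_n) : norm2 (- z) = norm2 z.
Proof. by congr Num.sqrt; apply: eq_bigr => i _; rewrite mxE sqrrN. Qed.

Lemma dotv_mx00 n (a b : 'rV[R]_n) : dotv a b = (a *m b^T) 0 0.
Proof. by rewrite mxE; apply: eq_bigr => i _; rewrite mxE. Qed.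

Lemma dotvv n (z : 'rV[R]_n) : dotv z z = norm2 z ^+ 2.
Proof. by rewrite norm2_sqr; apply: eq_bigr => i _; rewrite expr2. Qed.

Lemma dotv_mulmxl p q (w : 'rV[R]_p) (A : 'M[R]_(p, q)) (z : 'rV[R]_q) :
  dotv (w *m A) z = dotv w (z *m A^T).
Proof. by rewrite !dotv_mx00 trmx_mul trmxK mulmxA. Qed.

Lemma dotv_le_sqr n (a b : 'rV[R]_n) (t : R) : t != 0 ->
  2 * dotv a b <= t ^+ 2 * norm2 a ^+ 2 + t ^-2 * norm2 b ^+ 2.
Proof.
move=> t0; rewrite /dotv !norm2_sqr !mulr_sumr -big_split /=.
apply: ler_sum => i _.
have tt1 : t * t^-1 = 1 by rewrite mulfV.
have := sqr_ge0 (t * a 0 i - t^-1 * b 0 i).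
nra.
Qed.

Lemma norm2_le_mx_norm n (z : 'rV[R]_n) : norm2 z <= Num.sqrt n%:R * `|z|.
Proof.
rewrite -[`|z|]ger0_norm // -sqrtr_sqr -sqrtrM // ler_sqrt ?mulr_ge0 ?sqr_ge0 //.
rewrite mulr_natl -[n in _ *+ n]card_ord -sumr_const ler_sum // => i _.
rewrite -real_normK ?num_real // lerXn2r ?nnegrE //.
have -> : `|z| = mx_norm z by [].
rewrite mx_normrE; exact: (le_bigmax _ _ (0, i)).
Qed.

End Euclidean.

Section RangeComponent.
Context {R : realType} {p q : nat}.
Variables (J : 'M[R]_(p, q)) (s : R).
Hypotheses (s_gt0 : 0 < s) (J_sv : sv_lb J s).

Lemma sv_lb_range (w : 'rV[R]_p) :
  s * norm2 (w *m J) <= norm2 (w *m J *m J^T).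
Proof.
move: J_sv; rewrite /sv_lb; case: leqP => _ J_lb; first exact: J_lb.
set v := w *m J; set e := v *m J^T.
have w_le : s * norm2 w <= norm2 v := J_lb w.
have v_sqr : norm2 v ^+ 2 = dotv w e by rewrite -dotvv dotv_mulmxl.
have amgm := dotv_le_sqr w e (lt0r_neq0 s_gt0).
have sw_sqr : s ^+ 2 * norm2 w ^+ 2 <= norm2 v ^+ 2.
  rewrite -exprMn lerXn2r ?nnegrE ?norm2_ge0 //.
  by rewrite mulr_ge0 ?norm2_ge0 ?ltW.
have ss1 : s ^+ 2 * s ^-2 = 1 by rewrite mulfV // expf_neq0 // lt0r_neq0.
have sqr_le : (s * norm2 v) ^+ 2 <= norm2 e ^+ 2.
  have v_le : norm2 v ^+ 2 <= s ^-2 * norm2 e ^+ 2 by lra.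
  by rewrite exprMn (le_trans (ler_wpM2l (sqr_ge0 s) v_le)) // mulrA ss1 mul1r.
have := norm2_ge0 v; have := norm2_ge0 e; nra.
Qed.

Lemma range_component_bound (u v : 'rV[R]_q) (w : 'rV[R]_p) (b : 'rV[R]_p) :
  u *m J^T = 0 -> v = w *m J -> (u + v) *m J^T = - b -> s * norm2 v <= norm2 b.
Proof.
move=> u_null v_range uv_eq.
have v_eq : v *m J^T = - b by rewrite -uv_eq mulmxDl u_null add0r.
by rewrite -(norm2N b) -v_eq v_range; apply: sv_lb_range.
Qed.

End RangeComponent.

Lemma max_sqr_le_linear {R : realType} (s a b C : R) :
  0 < s -> 0 <= a -> s * a <= b -> b <= C ->
  Num.max a (a ^+ 2) <= (s^-1 + s ^-2 * C) * b.
Proof.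
move=> s_gt0 a_ge0 sa_le b_le.
have a_le : a <= s^-1 * b by rewrite ler_pdivlMl.
have t_ge0 : 0 <= s^-1 by rewrite invr_ge0 ltW.
have b_ge0 : 0 <= b by apply: le_trans _ sa_le; rewrite mulr_ge0 // ltW.
rewrite -exprVn; set t := s^-1 in a_le t_ge0 *.
have tb_ge0 : 0 <= t * b by rewrite mulr_ge0.
have tCb_ge0 : 0 <= t ^+ 2 * C * b.
  by rewrite !mulr_ge0 ?sqr_ge0 // (le_trans b_ge0 b_le).
have a_sqr : a ^+ 2 <= t ^+ 2 * C * b.
  have b_sqr : b ^+ 2 <= C * b by rewrite expr2 ler_wpM2r.
  have : a ^+ 2 <= (t * b) ^+ 2 by rewrite lerXn2r ?nnegrE.
  by rewrite exprMn -mulrA => /le_trans; apply; rewrite ler_wpM2l ?sqr_ge0.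
rewrite ge_max; apply/andP; split; lra.
Qed.

Section Standing.
Context {R : realType} {n m : nat}.
Variables (f : 'rV[R]_n -> R) (c : 'rV[R]_n -> 'rV[R]_m) (X : set 'rV[R]_n).
Hypothesis std : standing f c X.

Lemma standing_norm2_bounded (z0 : 'rV[R]_n) : X z0 ->
  exists2 C, 0 <= C & forall z, X z -> norm2 (c z) <= C.
Proof.
move: std => [_ [_ [_ [_ [_ [_ [_ [_ [[B c_le] _]]]]]]]]] X_z0.
exists (Num.sqrt m%:R * B).
  by rewrite mulr_ge0 ?sqrtr_ge0 // (le_trans _ (c_le _ X_z0)).
move=> z X_z; apply: le_trans (norm2_le_mx_norm _) _.
by rewrite ler_wpM2l ?sqrtr_ge0 ?c_le.
Qed.

Lemma standing_sv_lb : exists2 s, 0 < s & forall z, X z -> sv_lb (Jmat c z) s.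
Proof.
by move: std => [_ [_ [_ [_ [_ [_ [_ [_ [_ [_ [_ [s [s_gt0 J_sv]]]]]]]]]]]]]; exists s.
Qed.

End Standing.

Theorem lemma2p9 (R : realType) (n m : nat)
  (f : 'rV[R]_n -> R) (c : 'rV[R]_n -> 'rV[R]_m) (X : set 'rV[R]_n)
  (x d : nat -> 'rV[R]_n) (y : nat -> 'rV[R]_m) (H : nat -> 'M[R]_n)
  (tau alpha : nat -> R) (tau_m1 eps sig eta : R) :
  standing f c X ->
  (forall k, X (x k)) ->
  matrix_assumption c x H ->
  0 < tau_m1 -> 0 < eps < 1 -> 0 < sig < 1 -> 0 < eta < 1 ->
  common_iter f c tau_m1 eps sig x d y H tau alpha ->
  ((exists (rho Lm1 : R) (gm1 : 'I_m -> R) (Lin : nat -> nat -> R)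
           (gin : nat -> nat -> 'I_m -> R) (jk : nat -> nat),
      [/\ 1 < rho, 0 < Lm1, (forall i, 0 < gm1 i) &
          alg1_steps f c eta rho Lm1 gm1 Lin gin jk X x d H tau alpha])
   \/
   (exists nu alpha0 : R,
      [/\ 0 < nu < 1, 0 < alpha0 &
          alg2_steps f c eta nu alpha0 X x d H tau alpha])) ->
  exists kappa_v : R, 0 < kappa_v /\
    forall (k : nat) (u v : 'rV[R]_n),
      u *m (Jmat c (x k))^T = 0 ->
      (exists w : 'rV[R]_m, v = w *m Jmat c (x k)) ->
      d k = u + v ->
      Num.max (norm2 v) (norm2 v ^+ 2) <= kappa_v * norm2 (c (x k)).
Proof.
move=> std X_x _ _ _ _ _ iter _.
have [C C_ge0 c_le] := standing_norm2_bounded std (X_x 0%N).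
have [s s_gt0 J_sv] := standing_sv_lb std.
exists (s^-1 + s ^-2 * C); split.
  have : 0 < s^-1 by rewrite invr_gt0.
  have : 0 <= s ^-2 * C by rewrite mulr_ge0 // invr_ge0 exprn_ge0 // ltW.
  lra.
move=> k u v u_null [w v_range] d_eq.
have [_ lin_constr _ _ _] := iter k.
apply: max_sqr_le_linear; rewrite ?norm2_ge0 ?c_le //.
apply: (range_component_bound s_gt0 (J_sv _ (X_x k)) u_null v_range).
by rewrite -d_eq; exact: lin_constr.
Qed.
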